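(* Let $\mathbb{G}$ be a $\sigma$-compact, second countable locally compact Abelian group, let $\mathsf{\Lambda}\subseteq\mathbb{G}$ be a Meyer set, and let $d$ be a metric compatible with the topology of the hull $X_{\mathsf{\Lambda}}$. For $\varepsilon>0$ let $P_\varepsilon=\{t\in\mathbb{G}: d(t.\mathsf{\Lambda},\mathsf{\Lambda})<\varepsilon\}$, and for compact $K\subseteq\mathbb{G}$ let $\mathsf{\Lambda}_K=\{t\in\mathbb{G}:(\mathsf{\Lambda}-t)\cap K=\mathsf{\Lambda}\cap K\}$. Then the following are equivalent: (1) each $\mathsf{\Lambda}_K$ is relatively dense in $\mathbb{G}$, and for every compact $K\subseteq\mathbb{G}$ there is a compact $K'\subseteq\mathbb{G}$ with $\mathsf{\Lambda}_{K'}-\mathsf{\Lambda}_{K'}\subseteq\mathsf{\Lambda}_K$; (2) each $P_\varepsilon$ is relatively dense in $\mathbb{G}$, and for each $\varepsilon>0$ there is $\delta>0$ with $P_\delta-P_\delta\subseteq P_\varepsilon$.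
   Context: A Meyer set of $\mathbb{G}$ is a subset $\Lambda\subseteq\mathbb{G}$ that is uniformly discrete and relatively dense and for which there is a finite set $F\subseteq\mathbb{G}$ with $\Lambda-\Lambda\subseteq\Lambda+F$. The hull is $X_{\mathsf{\Lambda}}=\{\Lambda\subseteq\mathbb{G}: \forall K\subseteq\mathbb{G}\text{ compact}\ \exists t\in\mathbb{G},\ \Lambda\cap K=(\mathsf{\Lambda}-t)\cap K\}$, equipped with the uniformity whose basis consists of the sets $\mathcal{U}_{K,U}=\{(\Lambda,\Lambda')\in X_{\mathsf{\Lambda}}^2:\exists t,t'\in U,\ (\Lambda-t)\cap K=(\Lambda'-t')\cap K\}$ for $K\subseteq\mathbb{G}$ compact and $U$ a neighborhood of $0$; this makes $X_{\mathsf{\Lambda}}$ a compact metrizable space, with $\mathbb{G}$-action $t.\Lambda=\Lambda-t$. *)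

From HB Require Import structures.
From mathcomp Require Import all_boot all_order all_algebra.
From mathcomp Require Import all_classical all_reals all_analysis.
Set Implicit Arguments. Unset Strict Implicit. Unset Printing Implicit Defensive.
Import Order.TTheory GRing.Theory Num.Theory.
Local Open Scope classical_set_scope.
Local Open Scope ring_scope.

Section Defs.
Variable G : topologicalZmodType.

Definition sigma_compact : Prop :=
  exists K : nat -> set G, (forall n, compact (K n)) /\ \bigcup_n K n = [set: G].

Definition LCA_sc : Prop :=
  [/\ hausdorff_space G, locally_compact [set: G], @second_countable G
    & sigma_compact].

(* the action t.A = A - t *)
Definition tr (t : G) (A : set G) : set G := [set a - t | a in A].

Definition setdiffG (A B : set G) : set G :=
  [set z | exists a b, [/\ A a, B b & z = a - b]].

Definition uniformly_discrete (L : set G) : Prop :=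
  exists U : set G, nbhs (0 : G) U /\
    forall x y, L x -> L y -> U (x - y) -> x = y.

Definition relatively_dense (S : set G) : Prop :=
  exists K : set G, compact K /\
    forall g : G, exists s k, [/\ S s, K k & g = s + k].

Definition Meyer (L : set G) : Prop :=
  [/\ uniformly_discrete L, relatively_dense L &
    exists F : set G, finite_set F /\
      forall x y, L x -> L y -> exists l f, [/\ L l, F f & x - y = l + f]].

Definition hull (L0 : set G) : set (set G) :=
  [set L | forall K : set G, compact K -> exists t : G, L `&` K = tr t L0 `&` K].

(* basic entourage U_{K,U} of the hull uniformity *)
Definition hull_ent (L0 : set G) (K U : set G) : set (set G * set G) :=
  [set p | [/\ hull L0 p.1, hull L0 p.2 &
    exists t t', [/\ U t, U t' & tr t p.1 `&` K = tr t' p.2 `&` K]]].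

(* d is a metric on the hull inducing its (uniform) topology *)
Definition compatible_metric (R : realType) (L0 : set G)
    (d : set G -> set G -> R) : Prop :=
  [/\ (forall A B, hull L0 A -> hull L0 B -> 0 <= d A B),
      (forall A B, hull L0 A -> hull L0 B -> (d A B = 0 <-> A = B)),
      (forall A B, hull L0 A -> hull L0 B -> d A B = d B A),
      (forall A B C, hull L0 A -> hull L0 B -> hull L0 C ->
          d A C <= d A B + d B C) &
   (
      (forall A, hull L0 A -> forall eps : R, 0 < eps ->
          exists K U, [/\ compact K, nbhs (0 : G) U &
            forall B, hull_ent L0 K U (A, B) -> d A B < eps]) /\
      (forall A, hull L0 A -> forall K U, compact K -> nbhs (0 : G) U ->
          exists2 eps : R, 0 < eps &
            forall B, hull L0 B -> d A B < eps -> hull_ent L0 K U (A, B)))].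

Definition Peps (R : realType) (L0 : set G) (d : set G -> set G -> R)
    (eps : R) : set G :=
  [set t | d (tr t L0) L0 < eps].

Definition LamK (L0 K : set G) : set G :=
  [set t | tr t L0 `&` K = L0 `&` K].

End Defs.

(* The uniformity of the hull and the metric d have cofinal bases, so the
   return sets P_eps and the "thickened" sets Lam_K + U - U (K compact, U a
   neighbourhood of 0) are mutually cofinal: Lam_K - U lies in some P_eps, and
   every P_eps lies in some Lam_K + V - V.  Relative density passes along these
   inclusions since V can be taken inside a compact neighbourhood, and the
   difference conditions pass from Lam to P by splitting neighbourhoods of 0.
   For the converse difference condition, write a - b = r + w with r in Lam_K
   and w small; shifting by a point of the Meyer set puts w in L + F + F for a
   finite F, and uniform discreteness then forces w = 0. *)

From HB Require Import structures.
From mathcomp Require Import all_boot all_order all_algebra.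
From mathcomp Require Import all_classical all_reals all_analysis.
Import Order.TTheory GRing.Theory Num.Theory.
Local Open Scope classical_set_scope.
Local Open Scope ring_scope.

Set Implicit Arguments.
Unset Strict Implicit.

Section TopologicalZmodule.
Context {G : topologicalZmodType}.
Implicit Types (A B C F K L S U V : set G) (s t : G).

Lemma nbhs0_subr U : nbhs (0 : G) U ->
  exists2 V, nbhs (0 : G) V & forall x y, V x -> V y -> U (x - y).
Proof.
move=> U0; have := @sub_continuous G (0, 0) U; rewrite /= subr0 => /(_ U0).
move=> [[A B] /= [A0 B0] AB]; exists (A `&` B); first exact: filterI.
by move=> x y [Ax _] [_ By]; exact: (AB (x, y)).
Qed.

Lemma compact_image2_sub A B : compact A -> compact B ->
  compact [set a - b | a in A & b in B].
Proof.
move=> cA cB; rewrite image2E; apply: continuous_compact (compact_setX cA cB).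
have -> : uncurry (fun a b : G => a - b) = fun p => p.1 - p.2 by apply/funext => -[].
exact/continuous_subspaceT/sub_continuous.
Qed.

Lemma compact_image2_add A B : compact A -> compact B ->
  compact [set a + b | a in A & b in B].
Proof.
move=> cA cB; rewrite image2E; apply: continuous_compact (compact_setX cA cB).
have -> : uncurry (fun a b : G => a + b) = fun p => p.1 + p.2 by apply/funext => -[].
exact/continuous_subspaceT/add_continuous.
Qed.

Lemma locally_compact_nbhs0 : locally_compact [set: G] ->
  exists2 C, compact C & nbhs (0 : G) C.
Proof. by move=> /(_ 0 I) [C + [cC _]]; rewrite withinET; exists C. Qed.

Lemma relatively_dense_nonempty S : relatively_dense S -> exists s, S s.
Proof. by move=> [K [_ /(_ 0) [s [k [Ss _ _]]]]]; exists s. Qed.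

Lemma relatively_dense_subset A B :
  A `<=` B -> relatively_dense A -> relatively_dense B.
Proof.
move=> AB [K [cK AK]]; exists K; split => // g.
by have [a [k [Aa Kk ->]]] := AK g; exists a, k; split => //; exact: AB.
Qed.

Lemma relatively_dense_add_compact A B C : compact C ->
  B `<=` [set a + c | a in A & c in C] ->
  relatively_dense B -> relatively_dense A.
Proof.
move=> cC BAC [K [cK BK]]; exists [set c + k | c in C & k in K].
split; first exact: compact_image2_add.
move=> g; have [b [k [/BAC [a Aa [c Cc <-]] Kk ->]]] := BK g.
exists a, (c + k); split => //; last by rewrite addrA.
by exists c => //; exists k.
Qed.

Lemma tr0 A : tr 0 A = A.
Proof.
apply/seteqP; split => [_ [a Aa <-]|a Aa]; first by rewrite subr0.
by exists a; rewrite ?subr0.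
Qed.

Lemma tr_add A s t : tr s (tr t A) = tr (t + s) A.
Proof.
apply/seteqP; split => [_ [_ [a Aa <-] <-]|_ [a Aa <-]].
  by exists a; rewrite // opprD addrA.
by exists (a - t); [exists a | rewrite opprD addrA].
Qed.

Lemma tr_inj s : injective (tr s).
Proof. by move=> A B /(congr1 (tr (- s))); rewrite !tr_add subrr !tr0. Qed.

Lemma trI s A B : tr s (A `&` B) = tr s A `&` tr s B.
Proof.
apply/seteqP; split => [_ [a [Aa Ba] <-]|_ [[a Aa <-] [b Bb /addIr ba]]].
  by split; exists a.
by exists a => //; split; rewrite // -ba.
Qed.

Lemma LamK_subset L K K' : K `<=` K' -> LamK L K' `<=` LamK L K.
Proof.
by move=> KK' t; rewrite /LamK /= -(setIidr KK') !setIA => ->.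
Qed.

Lemma LamK_addl L K x t : L x -> K x -> LamK L K t -> L (x + t).
Proof.
move=> Lx Kx Lt; have : (L `&` K) x by [].
by rewrite -Lt => -[[l Ll <-] _]; rewrite subrK.
Qed.

Lemma LamK_tr_eq L K K1 u s : tr s K `<=` K1 ->
  tr u L `&` K1 = tr s L `&` K1 -> LamK L K (u - s).
Proof.
move=> sKK1 E; apply: (tr_inj (s := s)).
by rewrite !trI tr_add subrK -(setIidr sKK1) !setIA E.
Qed.

Lemma hull_tr L t : hull L (tr t L).
Proof. by move=> K _; exists t. Qed.

Lemma hull_self L : hull L L.
Proof. by rewrite -{2}(tr0 L); exact: hull_tr. Qed.

Lemma hull_ent_LamK L K U r s : nbhs (0 : G) U -> LamK L K r -> U s ->
  hull_ent L K U (L, tr (r - s) L).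
Proof.
move=> U0 Lr Us; split; [exact: hull_self | exact: hull_tr |].
exists 0, s; split => //; first exact: nbhs_singleton.
by rewrite /= tr0 tr_add subrK Lr.
Qed.

Lemma uniformly_discrete_near0 L c : hausdorff_space G ->
  uniformly_discrete L -> \forall w \near (0 : G), L (w - c) -> w = 0.
Proof.
move=> hG [U [U0 udU]]; have [V V0 VU] := nbhs0_subr U0.
have [[p [Vp Lp p0]]|] := pselect (exists p, [/\ V p, L (p - c) & p != 0]).
  have := hausdorff_accessible hG (x := 0) (y := p); rewrite eq_sym => /(_ p0).
  move=> [A [oA A0 Ap]].
  have nA : nbhs (0 : G) A by apply: open_nbhs_nbhs; split => //; rewrite -in_setE.
  apply: filterS (filterI V0 nA) => w [Vw Aw] Lw.
  have /addIr wp : w - c = p - c.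
    by apply: udU => //; rewrite opprB addrA subrK; exact: VU.
  by move: Ap; rewrite in_setE -wp.
move=> noV; apply: filterS V0 => w Vw Lw; apply/eqP/negPn/negP => w0.
by apply: noV; exists w.
Qed.

Lemma uniformly_discrete_near0_finite L F : hausdorff_space G ->
  uniformly_discrete L -> finite_set F ->
  \forall w \near (0 : G), forall c, F c -> L (w - c) -> w = 0.
Proof.
move=> hG ud /finite_fsetP [X ->].
have := @filter_bigI G G X (fun c => [set w | L (w - c) -> w = 0]) (nbhs 0)
  (nbhs_filter 0) (fun c _ => uniformly_discrete_near0 c hG ud).
by apply: filterS => w wX c Xc; exact: wX.
Qed.

Lemma Meyer_sub3 L F x0 :
  (forall x y, L x -> L y -> exists l f, [/\ L l, F f & x - y = l + f]) ->
  forall a b r, L (x0 + a) -> L (x0 + b) -> L (x0 + r) ->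
  exists2 c, [set f + f' + x0 | f in F & f' in F] c & L (a - b - r - c).
Proof.
move=> LF a b r La Lb Lr; have [l [f [Ll Ff e]]] := LF _ _ La Lb.
have [l' [f' [Ll' Ff' e']]] := LF _ _ Ll Lr.
exists (f' + f + x0); first by exists f' => //; exists f.
have eab : a - b = l + f by rewrite -e opprD addrACA subrr add0r.
have -> : a - b - r - (f' + f + x0) = l - (x0 + r) - f'.
  by rewrite eab !opprD !addrA [LHS](ACl ((1*6*3*4)*(2*5))) /= subrr addr0.
by rewrite e' addrK.
Qed.

End TopologicalZmodule.

Section HullMetric.
Context {G : topologicalZmodType} {R : realType}.
Context {L : set G} {d : set G -> set G -> R}.
Hypothesis dL : compatible_metric L d.

Lemma LamK_nbhs_sub_Peps eps : 0 < eps -> exists K U, [/\ compact K,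
  nbhs (0 : G) U & forall r s, LamK L K r -> U s -> Peps L d eps (r - s)].
Proof.
have [_ _ dC _ [ballE _]] := dL.
move=> e0; have [K [U [cK U0 KU]]] := ballE L (hull_self L) eps e0.
exists K, U; split => // r s Lr Us.
rewrite /Peps /= dC; [|exact: hull_tr|exact: hull_self].
exact/KU/hull_ent_LamK.
Qed.

Lemma LamK_sub_Peps eps : 0 < eps ->
  exists2 K, compact K & LamK L K `<=` Peps L d eps.
Proof.
move=> /LamK_nbhs_sub_Peps [K [U [cK U0 KU]]]; exists K => // r Lr.
by rewrite -(subr0 r); apply: KU => //; exact: nbhs_singleton.
Qed.

Lemma Peps_sub_LamK_nbhs K C V : compact K -> compact C ->
  nbhs (0 : G) C -> nbhs (0 : G) V ->
  exists2 eps : R, 0 < eps & forall t, Peps L d eps t ->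
    exists r s s', [/\ LamK L K r, (V `&` C) s, (V `&` C) s' & t = r + (s - s')].
Proof.
have [_ _ dC _ [_ entE]] := dL.
move=> cK cC C0 V0; pose K1 := [set k - c | k in K & c in C].
have [eps e0 epsE] :=
  entE L (hull_self L) K1 _ (compact_image2_sub cK cC) (filterI V0 C0).
exists eps => // t Pt.
have : d L (tr t L) < eps.
  by rewrite dC; [exact: Pt | exact: hull_self | exact: hull_tr].
move=> /(epsE _ (hull_tr L t)) [_ _ [s [s' [VCs VCs' E]]]].
exists (t + s' - s), s, s'; split => //; last by rewrite addrA subrK addrK.
apply: (@LamK_tr_eq _ _ _ K1).
  by move=> _ [k Kk <-]; exists k => //; exists s => //; case: VCs.
by rewrite -tr_add E.
Qed.

Lemma Peps_relatively_dense :
  (forall K : set G, compact K -> relatively_dense (LamK L K)) ->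
  forall eps : R, 0 < eps -> relatively_dense (Peps L d eps).
Proof.
move=> LKrd eps /LamK_sub_Peps [K cK KP].
exact: relatively_dense_subset KP (LKrd K cK).
Qed.

Lemma LamK_relatively_dense : locally_compact [set: G] ->
  (forall eps : R, 0 < eps -> relatively_dense (Peps L d eps)) ->
  forall K : set G, compact K -> relatively_dense (LamK L K).
Proof.
move=> lcG Prd K cK; have [C cC C0] := locally_compact_nbhs0 lcG.
have [eps e0 PK] := Peps_sub_LamK_nbhs cK cC C0 C0.
apply: relatively_dense_add_compact (compact_image2_sub cC cC) _ (Prd eps e0).
move=> t /PK [r [s [s' [Lr [_ Cs] [_ Cs'] ->]]]].
by exists r => //; exists (s - s') => //; exists s => //; exists s'.
Qed.

Lemma Peps_setdiffG_sub : locally_compact [set: G] ->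
  (forall K : set G, compact K -> exists K' : set G, compact K' /\
     setdiffG (LamK L K') (LamK L K') `<=` LamK L K) ->
  forall eps : R, 0 < eps -> exists2 delta : R, 0 < delta &
    setdiffG (Peps L d delta) (Peps L d delta) `<=` Peps L d eps.
Proof.
move=> lcG LKsub eps e0; have [C cC C0] := locally_compact_nbhs0 lcG.
have [K [U [cK U0 KU]]] := LamK_nbhs_sub_Peps e0.
have [V1 V10 V1U] := nbhs0_subr U0.
have [V2 V20 V2V1] := nbhs0_subr V10.
have [K' [cK' K'K]] := LKsub K cK.
have [delta d0 PK'] := Peps_sub_LamK_nbhs cK' cC C0 V20.
exists delta => // _ [a [b [Pa Pb ->]]].
have [ra [sa [sa' [Lra [Vsa _] [Vsa' _] ->]]]] := PK' a Pa.
have [rb [sb [sb' [Lrb [Vsb _] [Vsb' _] ->]]]] := PK' b Pb.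
have -> : ra + (sa - sa') - (rb + (sb - sb')) =
          (ra - rb) - ((sb - sb') - (sa - sa')).
  by rewrite opprB opprD addrACA addrC.
apply: KU; first by apply: K'K; exists ra, rb.
by apply: V1U; exact: V2V1.
Qed.

Lemma LamK_setdiffG_sub : hausdorff_space G -> locally_compact [set: G] ->
  Meyer L ->
  (forall eps : R, 0 < eps -> exists2 delta : R, 0 < delta &
    setdiffG (Peps L d delta) (Peps L d delta) `<=` Peps L d eps) ->
  forall K : set G, compact K -> exists K' : set G, compact K' /\
    setdiffG (LamK L K') (LamK L K') `<=` LamK L K.
Proof.
move=> hG lcG [ud /relatively_dense_nonempty [x0 Lx0] [F [finF LF]]] Psub K cK.
have [C cC C0] := locally_compact_nbhs0 lcG.
have cKx0 : compact (K `|` [set x0]) by apply: compactU => //; exact: compact_set1.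
have [V V0 VL] := nbhs0_subr (uniformly_discrete_near0_finite hG ud
  (finite_image2 (fun f f' => f + f' + x0) finF finF)).
have [eps e0 PK] := Peps_sub_LamK_nbhs cKx0 cC C0 V0.
have [delta d0 Pdelta] := Psub eps e0.
have [K' cK' K'P] := LamK_sub_Peps d0.
(* With x0 in the window, x0 + t lies in L for every return vector t, which
   brings the Meyer property into play. *)
exists (K' `|` [set x0]); split; first by apply: compactU => //; exact: compact_set1.
move=> _ [a [b [La Lb ->]]].
have LP : LamK L (K' `|` [set x0]) `<=` Peps L d delta.
  by move=> t /(LamK_subset (@subsetUl _ K' [set x0])) /K'P.
have Pab : Peps L d eps (a - b) by apply: Pdelta; exists a, b; split => //; exact: LP.
have [r [s [s' [Lr [Vs _] [Vs' _] abr]]]] := PK _ Pab.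
have Lx0a : forall K t, LamK L (K `|` [set x0]) t -> L (x0 + t).
  by move=> ? t; apply: LamK_addl => //; right.
have [c Fc Lc] := Meyer_sub3 LF (Lx0a _ _ La) (Lx0a _ _ Lb) (Lx0a _ _ Lr).
have ss'0 : s - s' = 0.
  apply: VL Fc _ => //.
  by rewrite (_ : s - s' = a - b - r) // abr addrAC subrr add0r.
apply: (LamK_subset (@subsetUl _ K [set x0])).
by rewrite abr ss'0 addr0.
Qed.

End HullMetric.

Unset Implicit Arguments.
Set Strict Implicit.

Theorem proposition4p2 (G : topologicalZmodType) (R : realType)
    (L0 : set G) (d : set G -> set G -> R) :
  LCA_sc G -> Meyer L0 -> compatible_metric L0 d ->
  ( (forall K : set G, compact K -> relatively_dense (LamK L0 K)) /\
    (forall K : set G, compact K -> exists K' : set G,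
        compact K' /\ setdiffG (LamK L0 K') (LamK L0 K') `<=` LamK L0 K) )
  <->
  ( (forall eps : R, 0 < eps -> relatively_dense (Peps L0 d eps)) /\
    (forall eps : R, 0 < eps -> exists2 delta : R, 0 < delta &
        setdiffG (Peps L0 d delta) (Peps L0 d delta) `<=` Peps L0 d eps) ).
Proof.
move=> [hG lcG _ _] L0M dL; split=> [[LKrd LKsub]|[Prd Psub]]; split.
- exact: Peps_relatively_dense dL LKrd.
- exact: Peps_setdiffG_sub dL lcG LKsub.
- exact: LamK_relatively_dense dL lcG Prd.
- exact: LamK_setdiffG_sub dL hG lcG L0M Psub.
Qed.
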